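(* Let $\Sigma=(\mathbf{x},\mathbf{F})$ be an LP seed of rank $n\ge2$ satisfying Condition 1.2. Then, as $R$-modules, $$R[x_2,x'_2,\dots,x_n,x'_n]=\ker(\varphi)\oplus R^{st}[x_2,x'_2,\dots,x_n,x'_n],$$ and the restriction of $\varphi$ to $R^{st}[x_2,x'_2,\dots,x_n,x'_n]$ is injective.
   Context: $R$ is a unique factorization domain containing $\mathbb{Z}$ and $\mathcal{F}$ is the field of rational functions in $n$ variables over $\mathrm{Frac}(R)$. An LP seed of rank $n$ is a pair $(\mathbf{x},\mathbf{F})$ where $\mathbf{x}=\{x_1,\dots,x_n\}$ is a transcendence basis of $\mathcal{F}$ over $\mathrm{Frac}(R)$ and $\mathbf{F}=\{F_1,\dots,F_n\}$ are irreducible polynomials in $R[x_1,\dots,x_n]$ with $x_j\nmid F_i$ for all $i,j$ and $F_i$ not involving $x_i$. The exchange Laurent polynomial is $\hat F_j=F_j/\prod_{k\neq j}x_k^{a_k}$, with $a_k\in\mathbb{Z}_{\ge0}$ maximal such that $F_k^{a_k}$ divides $F_j|_{x_k\leftarrow F_k/x'_k}$ in $R[x_1,\dots,x_{k-1},(x'_k)^{-1},x_{k+1},\dots,x_n]$. Set $x'_j=\hat F_j/x_j$. Lexicographic order on $\mathbb{Z}^n$: $\mathbf{a}\prec\mathbf{a}'$ if the first nonzero entry of $\mathbf{a}'-\mathbf{a}$ is positive; the lexicographically first monomial of a polynomial is its term with $\prec$-smallest exponent vector. Condition 1.2: for every $k\in[1,n]$, with $M_k$ the lexicographically first monomial of $F_k$: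 (i) $\hat F_k=F_k$; (ii) $M_k=\mathbf{x}^{\mathbf{v}_k}=x_{k+1}^{v_{k+1,k}}\cdots x_n^{v_{n,k}}$ (coefficient $1$) with $\mathbf{v}_k\in\mathbb{Z}_{\ge0}^{n-k}$ for $k\in[1,n-1]$, and $M_n=1$; (iii) if $k\ne1$ and $F_k$ involves $x_1$, then every monomial of $F_k-M_k$ is divisible by $x_1$; (iv) if $k\notin\{1,2\}$, $F_k$ does not involve $x_1$, and there is $i\in[2,k-1]$ such that $x_k$ divides $M_i$, then every monomial of $F_k-M_k$ is divisible by $x_i$. Under (i), $x'_j=F_j/x_j\in R[x_1,x_2^{\pm1},\dots,x_n^{\pm1}]$ for $j\ge2$, so $R[x_2,x'_2,\dots,x_n,x'_n]\subseteq R[x_1,x_2^{\pm1},\dots,x_n^{\pm1}]$; $\varphi:R[x_2,x'_2,\dots,x_n,x'_n]\to R[x_2^{\pm1},\dots,x_n^{\pm1}]$ is the restriction of the $R$-algebra homomorphism $R[x_1,x_2^{\pm1},\dots,x_n^{\pm1}]\to R[x_2^{\pm1},\dots,x_n^{\pm1}]$ sending $x_1\mapsto0$ and $x_i^{\pm1}\mapsto x_i^{\pm1}$ ($i\ge2$). A standard monomial in $x_2,x'_2,\dots,x_n,x'_n$ is a monomial in these containing no product $x_ix'_i$; $R^{st}[x_2,x'_2,\dots,x_n,x'_n]$ denotes their $R$-linear span. *)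

From HB Require Import structures.
From mathcomp Require Import all_boot all_order all_algebra.
From mathcomp Require Import fraction.
From mathcomp Require Export mpoly.
From Stdlib Require Import ClassicalEpsilon.

Set Implicit Arguments.
Unset Strict Implicit.
Unset Printing Implicit Defensive.

Import Order.TTheory GRing.Theory Num.Theory.
Local Open Scope ring_scope.

Definition rdvd (T : comRingType) (a b : T) : Prop := exists c : T, b = a * c.

Definition irreducible_elt (T : idomainType) (a : T) : Prop :=
  [/\ a != 0, a \isn't a GRing.unit &
      forall b c : T, a = b * c -> b \is a GRing.unit \/ c \is a GRing.unit].

Definition prime_elt (T : idomainType) (a : T) : Prop :=
  [/\ a != 0, a \isn't a GRing.unit &
      forall b c : T, rdvd a (b * c) -> rdvd a b \/ rdvd a c].

(* Unique factorization domain: every nonzero nonunit is a (finite)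
   product of irreducible elements, and every irreducible element is
   prime (which is equivalent to uniqueness of the factorization). *)
Definition is_UFD (T : idomainType) : Prop :=
  (forall a : T, a != 0 -> a \isn't a GRing.unit ->
     exists s : seq T, List.Forall (@irreducible_elt T) s /\ a = \prod_(p <- s) p)
  /\ (forall a : T, irreducible_elt a -> prime_elt a).

(* The domain R contains Z, i.e. the canonical map Z -> R is injective. *)
Definition contains_Z (T : idomainType) : Prop :=
  forall m : nat, (m.+1)%:R != (0 : T).

(* Variables x_1, ..., x_n are 'X_i for i : 'I_n (x_1 is index 0).      *)

Definition lexlt (n : nat) (a b : 'X_{1..n}) : bool :=
  [exists i : 'I_n, [forall j : 'I_n, (j < i)%N ==> (a j == b j)] && (a i < b i)%N].

Definition lexfirst (n : nat) (R : ringType) (p : {mpoly R[n]}) (m : 'X_{1..n}) : Prop :=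
  m \in msupp p /\ forall m', m' \in msupp p -> m' != m -> lexlt m m'.

Definition involves (n : nat) (R : ringType) (p : {mpoly R[n]}) (i : 'I_n) : Prop :=
  exists2 m, m \in msupp p & (0 < m i)%N.

Definition rest_divisible (n : nat) (R : ringType) (p : {mpoly R[n]}) (m0 : 'X_{1..n})
  (i : 'I_n) : Prop :=
  forall m, m \in msupp p -> m != m0 -> (0 < m i)%N.

(* substitution x_k <- c * x_k (here x_k is reinterpreted as (x'_k)^{-1},
   so this realises x_k <- F_k / x'_k in R[x_1,..,(x'_k)^{-1},..,x_n]) *)
Definition subst_var (n : nat) (R : comRingType) (k : 'I_n) (c : {mpoly R[n]})
  (p : {mpoly R[n]}) : {mpoly R[n]} :=
  p \mPo [tuple (if i == k then c * 'X_i else 'X_i) | i < n].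

Definition LP_seed (n : nat) (R : idomainType) (F : 'I_n -> {mpoly R[n]}) : Prop :=
  forall i : 'I_n,
    [/\ irreducible_elt (F i),
        forall j : 'I_n, ~ rdvd ('X_j) (F i) &
        ~ involves (F i) i].

(* Condition 1.2 (i): \hat F_j = F_j, i.e. a_k = 0 for all k <> j, i.e.
   F_k (= F_k^1) does not divide F_j|_{x_k <- F_k/x'_k}. *)
Definition cond12_i (n : nat) (R : idomainType) (F : 'I_n -> {mpoly R[n]}) : Prop :=
  forall j k : 'I_n, k != j -> ~ rdvd (F k) (subst_var k (F k) (F j)).

(* Condition 1.2 (ii)-(iv), with M k the lexicographically first monomial
   of F k (0-based indices: paper's x_k is 'X_(k-1)). *)
Definition cond12_rest (n : nat) (R : idomainType) (F : 'I_n -> {mpoly R[n]})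
  (M : 'I_n -> 'X_{1..n}) : Prop :=
  forall k : 'I_n,
    [/\
        lexfirst (F k) (M k) /\ (F k)@_(M k) = 1 /\
          (forall i : 'I_n, (i <= k)%N -> M k i = 0%N),
        forall i0 : 'I_n, (i0 : nat) = 0%N -> (k : nat) != 0%N ->
          involves (F k) i0 -> rest_divisible (F k) (M k) i0 &
        forall i0 : 'I_n, (i0 : nat) = 0%N -> (2 <= k)%N -> ~ involves (F k) i0 ->
          forall i : 'I_n, (1 <= i)%N -> (i < k)%N -> (0 < M i k)%N ->
            rest_divisible (F k) (M k) i].

Definition condition_1_2 (n : nat) (R : idomainType) (F : 'I_n -> {mpoly R[n]}) : Prop :=
  cond12_i F /\ exists M : 'I_n -> 'X_{1..n}, cond12_rest F M.

Section Ambient.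
Variables (n : nat) (R : idomainType) (F : 'I_n -> {mpoly R[n]}).

Definition ambient := {fraction {mpoly R[n]}}.

Definition tofr (p : {mpoly R[n]}) : ambient := @FracField.tofrac {mpoly R[n]} p.

Definition xv (i : 'I_n) : ambient := tofr 'X_i.

(* x'_j = \hat F_j / x_j, and \hat F_j = F_j under Condition 1.2 (i) *)
Definition xpv (j : 'I_n) : ambient := tofr (F j) / xv j.

Definition cst (c : R) : ambient := tofr c%:MP.

Definition gmon (a b : 'I_n -> nat) : ambient :=
  \prod_(i < n | (i : nat) != 0%N) (xv i ^+ a i * xpv i ^+ b i).

Definition is_standard (a b : 'I_n -> nat) : Prop :=
  forall i : 'I_n, (i : nat) != 0%N -> a i = 0%N \/ b i = 0%N.

(* R[x_2, x'_2, ..., x_n, x'_n] as a subset of the ambient field *)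
Definition inA (f : ambient) : Prop :=
  exists s : seq (R * ('I_n -> nat) * ('I_n -> nat)),
    f = \sum_(t <- s) cst t.1.1 * gmon t.1.2 t.2.

(* R^{st}[x_2, x'_2, ..., x_n, x'_n]: R-span of standard monomials *)
Definition inRst (f : ambient) : Prop :=
  exists s : seq (R * ('I_n -> nat) * ('I_n -> nat)),
    (forall t, List.In t s -> is_standard t.1.2 t.2) /\
    f = \sum_(t <- s) cst t.1.1 * gmon t.1.2 t.2.

(* D = x_2 ... x_n; the Laurent ring R[x_1, x_2^{+-1}, ..., x_n^{+-1}]
   consists of the p / D^k *)
Definition Dprod : {mpoly R[n]} := \prod_(i < n | (i : nat) != 0%N) 'X_i.

Definition kill_x1 (p : {mpoly R[n]}) : {mpoly R[n]} :=
  p \mPo [tuple (if (i : nat) == 0%N then 0 else 'X_i) | i < n].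

Definition phi_graph (f g : ambient) : Prop :=
  exists (p : {mpoly R[n]}) (k : nat),
    f = tofr p / tofr (Dprod ^+ k) /\ g = tofr (kill_x1 p) / tofr (Dprod ^+ k).

(* phi : R[x_1, x_2^{+-1},..] -> R[x_2^{+-1},..], x_1 |-> 0 (values outside
   the Laurent ring are irrelevant) *)
Definition phi (f : ambient) : ambient :=
  epsilon (inhabits 0) (fun g => phi_graph f g).

End Ambient.

(* Clearing denominators by a power of D = x_2 ... x_n, phi maps the monomial
   x^a x'^b to prod_i x_i^(a_i + k - b_i) G_i^(b_i) / D^k, where
   G_i = F_i|_{x_1 <- 0}.  By Condition 1.2 (ii), G_i has lex-first monomial M_i
   with coefficient 1, and M_i only involves the x_j with j > i; hence the
   lex-first monomial of that numerator determines a standard (a, b), and phi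
   is injective on R^st.  On the other hand phi (x_i x'_i) = G_i, which rewrites
   the image of any monomial into images of monomials of smaller x'-degree, so
   phi (R[x, x']) = phi (R^st); this gives the decomposition.  Only
   Condition 1.2 (ii) is used. *)

From HB Require Import structures.
From mathcomp Require Import all_boot all_order all_algebra.
From mathcomp Require Import fraction mpoly zify.
From Stdlib Require Import ClassicalEpsilon.

Set Implicit Arguments.
Unset Strict Implicit.
Unset Printing Implicit Defensive.

Import Order.TTheory GRing.Theory.
Local Open Scope ring_scope.

Section LexOrder.
Variable n : nat.
Implicit Types a b c d : 'X_{1..n}.

Definition lexv a : n.-tuplelexi nat := multinom_val a.

Lemma lexv_inj : injective lexv.
Proof. by move=> a b /val_inj. Qed.

Lemma tnth_lexv a i : tnth (lexv a) i = a i.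
Proof. by []. Qed.

Lemma lexltE a b : lexlt a b = (lexv a < lexv b)%O.
Proof.
apply/existsP/ltxi_tuplePlt => [[i /andP[/forallP eq_lt lt_i]]|[i eq_lt lt_i]].
  by exists i => // j ji; apply/eqP; have := eq_lt j; rewrite ji.
by exists i; apply/andP; split=> //; apply/forallP => j; apply/implyP => /eq_lt/eqP.
Qed.

Lemma lexv_ltD2r a b c : (lexv a < lexv b)%O -> (lexv (a + c) < lexv (b + c))%O.
Proof.
case/ltxi_tuplePlt => i eq_lt lt_i; apply/ltxi_tuplePlt; exists i.
  by move=> j /eq_lt; rewrite !tnth_lexv !mnmDE => ->.
by move: lt_i; rewrite !tnth_lexv !mnmDE !ltEnat /= ltn_add2r.
Qed.

Lemma lexv_ltD2l a b c : (lexv a < lexv b)%O -> (lexv (c + a) < lexv (c + b))%O.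
Proof. by rewrite ![(c + _)%MM]addmC; apply: lexv_ltD2r. Qed.

Lemma lexv_ltD a b c d :
  (lexv a < lexv b)%O -> (lexv c <= lexv d)%O -> (lexv (a + c) < lexv (b + d))%O.
Proof.
move=> lt_ab; rewrite le_eqVlt => /orP[/eqP/lexv_inj->|lt_cd].
  exact: lexv_ltD2r.
exact: lt_trans (lexv_ltD2r c lt_ab) (lexv_ltD2l b lt_cd).
Qed.

Lemma lexv_leD a b c d :
  (lexv a <= lexv b)%O -> (lexv c <= lexv d)%O -> (lexv (a + c) <= lexv (b + d))%O.
Proof.
rewrite [(lexv a <= _)%O]le_eqVlt => /orP[/eqP/lexv_inj->|lt_ab le_cd].
  rewrite le_eqVlt => /orP[/eqP/lexv_inj->//|lt_cd].
  by rewrite ltW // lexv_ltD2l.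
by rewrite ltW // lexv_ltD.
Qed.

Lemma lexv_min_exists (s : seq 'X_{1..n}) :
  s != [::] -> exists2 m0, m0 \in s & all (fun m => lexv m0 <= lexv m)%O s.
Proof.
elim: s => // a [|b s] IH _; first by exists a; rewrite ?mem_seq1 /= ?lexx.
have [m0 m0_in min_m0] := IH isT.
have [le_a|le_m0] := leP (lexv a) (lexv m0).
  exists a; first exact: mem_head.
  apply/allP => m; rewrite inE => /predU1P[->|/(allP min_m0)]; first exact: lexx.
  exact: le_trans.
exists m0; first by rewrite inE m0_in orbT.
by apply/andP; split => //; apply: ltW.
Qed.

End LexOrder.

Section LexMonic.
Variables (n : nat) (R : nzRingType).
Implicit Types (p q : {mpoly R[n]}) (m u : 'X_{1..n}).

Definition lexmonic p m := p@_m = 1 /\ forall u, u \in msupp p -> (lexv m <= lexv u)%O.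

Lemma lexfirst_lexmonic p m : lexfirst p m -> p@_m = 1 -> lexmonic p m.
Proof.
move=> [_ first_m] pm1; split=> // u u_in.
have [->|neq_um] := eqVneq u m; first exact: lexx.
by rewrite ltW // -lexltE first_m.
Qed.

Lemma lexmonic_coef_lt p m u : lexmonic p m -> (lexv u < lexv m)%O -> p@_u = 0.
Proof.
move=> [_ first_m] lt_um; apply: memN_msupp_eq0; apply: contraTN lt_um.
by move/first_m; rewrite -leNgt.
Qed.

Lemma lexmonic_tail p m : lexmonic p m ->
  (p - 'X_[m])@_m = 0 /\ forall u, u \in msupp (p - 'X_[m]) -> (lexv m < lexv u)%O.
Proof.
move=> [pm1 first_m]; split; first by rewrite mcoeffB mcoeffX eqxx pm1 subrr.
move=> u; rewrite mcoeff_msupp mcoeffB mcoeffX.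
have [<-|neq_mu] := eqVneq m u; first by rewrite pm1 subrr eqxx.
rewrite subr0 -mcoeff_msupp => /first_m; rewrite le_eqVlt => /orP[/eqP/lexv_inj|//].
by move/eqP: neq_mu.
Qed.

Lemma lexmonicX m : lexmonic 'X_[m] m.
Proof.
split; first by rewrite mcoeffX eqxx.
by move=> u; rewrite msuppX inE => /eqP->.
Qed.

Lemma lexmonic1 : lexmonic 1 0%MM.
Proof. by rewrite -mpolyX0; apply: lexmonicX. Qed.

Lemma lexmonicM p q m m' : lexmonic p m -> lexmonic q m' -> lexmonic (p * q) (m + m').
Proof.
move=> lm_p lm_q; split; last first.
  move=> w /msuppM_le /allpairsP [[u v] [/= u_in v_in ->]].
  by apply: lexv_leD; [apply: lm_p.2 | apply: lm_q.2].
have [p'm0 first_p'] := lexmonic_tail lm_p; have [q'm0 first_q'] := lexmonic_tail lm_q.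
rewrite -(subrK 'X_[m] p) -(subrK 'X_[m'] q).
move: (p - _) (q - _) p'm0 first_p' q'm0 first_q' => p' q' p'm0 first_p' q'm0 first_q'.
have p'q'0 : (p' * q')@_(m + m') = 0.
  apply: memN_msupp_eq0; apply/negP => /msuppM_le /allpairsP [[u v] [/= u_in v_in uvE]].
  have := lexv_ltD (first_p' _ u_in) (ltW (first_q' _ v_in)).
  by rewrite uvE ltxx.
rewrite mulrDl !mulrDr !mcoeffD p'q'0 -mpolyXD mcoeffX eqxx.
rewrite -commr_mpolyX mcoeffMX q'm0 [(m + m')%MM]addmC mcoeffMX p'm0.
by rewrite !(add0r, addr0).
Qed.

Lemma lexmonicXn p m k : lexmonic p m -> lexmonic (p ^+ k) (m *+ k).
Proof.
move=> lm_p; elim: k => [|k IHk]; first by rewrite expr0 mulm0n; apply: lexmonic1.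
by rewrite exprS mulmS; apply: lexmonicM.
Qed.

Lemma lexmonic_prod (I : Type) (r : seq I) (P : pred I) (p : I -> {mpoly R[n]})
    (m : I -> 'X_{1..n}) :
  (forall i, P i -> lexmonic (p i) (m i)) ->
  lexmonic (\prod_(i <- r | P i) p i) (\big[+%MM/0%MM]_(i <- r | P i) m i).
Proof.
move=> lm_p; apply: (big_ind2 lexmonic lexmonic1) => // *.
exact: lexmonicM.
Qed.

End LexMonic.

Lemma eq_big_all (T : Type) (V : nmodType) (Q : pred T) (s : seq T) (F G : T -> V) :
  all Q s -> (forall i, Q i -> F i = G i) -> \sum_(i <- s) F i = \sum_(i <- s) G i.
Proof.
move=> /all_filterP Qs eqFG.
by rewrite -Qs !big_filter; apply: eq_bigr.
Qed.

Section LeadRelation.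
Variables (n : nat) (R : nzRingType) (I : Type) (P : pred I).
Variables (p : I -> {mpoly R[n]}) (m : I -> 'X_{1..n}).
Hypothesis lexmonic_p : forall i, P i -> lexmonic (p i) (m i).

Lemma sum_lead_class (W : nzRingType) (h : {rmorphism R -> W}) (u : I -> W)
    (s : seq I) (c : I -> R) m0 :
  all P s -> (forall i j, P i -> P j -> m i = m0 -> m j = m0 -> u i = u j) ->
  \sum_(i <- s | m i == m0) c i = 0 -> \sum_(i <- s | m i == m0) h (c i) * u i = 0.
Proof.
move=> Ps u_class c0; rewrite -big_filter; rewrite -big_filter in c0.
have : all (fun i => P i && (m i == m0)) [seq i <- s | m i == m0].
  by rewrite all_filter; apply: sub_all Ps => i /= Pi; apply/implyP => ->; rewrite Pi.
case: [seq i <- s | _] c0 => [|i0 r] c0 /=; first by rewrite big_nil.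
move=> /andP[/andP[P0 /eqP m0E] Pr].
rewrite big_cons (eq_big_all Pr (G := fun i => h (c i) * u i0)).
  rewrite big_cons in c0.
  by rewrite -mulr_suml -mulrDl -rmorph_sum -rmorphD c0 rmorph0 mul0r.
by move=> i /andP[Pi /eqP miE]; rewrite (u_class i i0).
Qed.

(* A relation among polynomials with lex-leading monomials [m i] that only
   depend on their leading monomial is also satisfied by any family [g] that
   only depends on [m]: the coefficient at the smallest leading monomial
   kills its whole class, and we induct on the remaining terms. *)
Lemma lexmonic_relation (V : nzRingType) (f : {rmorphism R -> V}) (g : I -> V)
    (s : seq I) (c : I -> R) :
  (forall i j, P i -> P j -> m i = m j -> p i = p j /\ g i = g j) ->
  all P s -> \sum_(i <- s) (c i)%:MP * p i = 0 -> \sum_(i <- s) f (c i) * g i = 0.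
Proof.
move=> factor_m; move: {2}(size s) (leqnn (size s)) => N.
elim: N s => [|N IHN] [|i1 s1] // size_s Ps rel; rewrite ?big_nil //.
set s := i1 :: s1 in size_s Ps rel *.
have [m0 m0_in min_m0] := @lexv_min_exists n (map m s) isT.
rewrite all_map in min_m0.
have class0 : \sum_(i <- s | m i == m0) c i = 0.
  transitivity ((\sum_(i <- s) (c i)%:MP * p i)@_m0); last by rewrite rel mcoeff0.
  rewrite big_mkcond raddf_sum /=.
  have Ps_min : all (fun i => P i && (lexv m0 <= lexv (m i))%O) s.
    by have := all_predI P (fun i => lexv m0 <= lexv (m i))%O s; rewrite Ps min_m0.
  apply: (eq_big_all Ps_min) => i /andP[Pi le_i]; rewrite mcoeffCM.
  have [<-|neq_i] := eqVneq (m i) m0; first by rewrite (lexmonic_p Pi).1 mulr1.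
  rewrite (lexmonic_coef_lt (lexmonic_p Pi)) ?mulr0 // lt_neqAle le_i andbT.
  by rewrite (inj_eq (@lexv_inj n)) eq_sym.
have classes i j : P i -> P j -> m i = m0 -> m j = m0 -> p i = p j /\ g i = g j.
  by move=> Pi Pj mi0 mj0; apply: factor_m; rewrite ?mi0.
rewrite (bigID (fun i => m i == m0)) /= in rel; rewrite (bigID (fun i => m i == m0)) /=.
rewrite (sum_lead_class f Ps _ class0); last first.
  by move=> i j Pi Pj mi0 mj0; case: (classes i j Pi Pj mi0 mj0).
rewrite (sum_lead_class (@mpolyC n R) Ps _ class0) in rel; last first.
  by move=> i j Pi Pj mi0 mj0; case: (classes i j Pi Pj mi0 mj0).
rewrite add0r -big_filter in rel; rewrite add0r -big_filter; apply: IHN rel.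
  have class_nonempty : (0 < count (fun i => m i == m0) s)%N.
    by rewrite -has_count; move: m0_in; rewrite -has_pred1 has_map.
  have : size s = (count (fun i => m i == m0) s + count (fun i => m i != m0) s)%N.
    by rewrite -(count_predC (fun i => m i == m0)).
  rewrite size_filter; lia.
by rewrite all_filter; apply: sub_all Ps => i Pi; apply/implyP.
Qed.

End LeadRelation.

Section Ambient.
Variables (n : nat) (R : idomainType).
Local Notation K := (ambient n R).
Local Notation D := (Dprod n R).
Implicit Types (p : {mpoly R[n]}) (q : 'I_n -> {mpoly R[n]}) (m : 'X_{1..n}).
Implicit Types (a b : 'I_n -> nat) (f g : K).

HB.instance Definition _ := GRing.RMorphism.copy (@tofr n R) (@tofrac {mpoly R[n]}).
HB.instance Definition _ :=
  GRing.RMorphism.copy (cst n (R:=R)) (@tofr n R \o @mpolyC n R).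
HB.instance Definition _ := GRing.RMorphism.copy (@kill_x1 n R)
  (comp_mpoly [tuple (if (i : nat) == 0%N then 0 else 'X_i) | i < n]).

Lemma tofr_inj : injective (@tofr n R).
Proof. by move=> p q /eqP; rewrite tofrac_eq => /eqP. Qed.

Lemma xv_neq0 (i : 'I_n) : xv R i != 0.
Proof.
rewrite tofrac_eq0; apply/eqP => /(congr1 (mcoeff U_(i)%MM)).
by rewrite mcoeffX eqxx mcoeff0 => /eqP; rewrite oner_eq0.
Qed.

Lemma Dprod_neq0 k : tofr (D ^+ k) != 0.
Proof.
by rewrite rmorphXn rmorph_prod expf_neq0 //; apply/prodf_neq0 => i _; apply: xv_neq0.
Qed.

Lemma kill_x1X (i : 'I_n) : (i : nat) != 0%N -> kill_x1 ('X_i : {mpoly R[n]}) = 'X_i.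
Proof.
by move=> /negbTE i_neq0; rewrite /kill_x1 comp_mpolyXU -tnth_nth tnth_mktuple i_neq0.
Qed.

Lemma kill_x1C c : kill_x1 (c%:MP : {mpoly R[n]}) = c%:MP.
Proof. exact: comp_mpolyC. Qed.

Lemma kill_x1_Dprod : kill_x1 D = D.
Proof. by rewrite rmorph_prod; apply: eq_bigr => i /kill_x1X. Qed.

(* [phi] is well defined: [kill_x1] fixes the denominators [D ^+ k]. *)
Lemma phi_frac p k : phi (tofr p / tofr (D ^+ k)) = tofr (kill_x1 p) / tofr (D ^+ k).
Proof.
have graph : phi_graph (tofr p / tofr (D ^+ k)) (tofr (kill_x1 p) / tofr (D ^+ k)).
  by exists p, k.
rewrite /phi.
have [p' [k' [eq_pp' ->]]] := epsilon_spec (inhabits 0) _ (ex_intro _ _ graph).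
apply/eqP; move/eqP: eq_pp'.
rewrite !(eqr_div _ _ (Dprod_neq0 _) (Dprod_neq0 _)) -!rmorphM !(inj_eq tofr_inj).
by move=> /eqP eq_num; rewrite -kill_x1_Dprod -!rmorphXn -!rmorphM eq_num.
Qed.

Lemma mul_exp_div (x y : K) (a b k : nat) : x != 0 -> (b <= k)%N ->
  x ^+ a * (y / x) ^+ b * x ^+ k = x ^+ (a + (k - b)) * y ^+ b.
Proof.
move=> x_neq0 le_bk; have -> : x ^+ k = x ^+ b * x ^+ (k - b) by rewrite -exprD subnKC.
have xb_neq0 : x ^+ b != 0 by rewrite expf_neq0.
by rewrite expr_div_n exprD mulrA -[_ * _ * x ^+ b]mulrA divfK // mulrAC.
Qed.

Definition gnumer k (q : 'I_n -> {mpoly R[n]}) (a b : 'I_n -> nat) : {mpoly R[n]} :=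
  \prod_(i < n | (i : nat) != 0%N) ('X_i ^+ (a i + (k - b i)) * q i ^+ b i).

Lemma gmon_numer k q a b : (forall i, b i <= k)%N ->
  gmon q a b = tofr (gnumer k q a b) / tofr (D ^+ k).
Proof.
move=> le_bk; apply: (canRL (mulfK (Dprod_neq0 k))).
rewrite /gmon /Dprod -prodrXl !rmorph_prod -big_split /=; apply: eq_bigr => i _.
by rewrite rmorphXn mul_exp_div ?xv_neq0 // rmorphM !rmorphXn.
Qed.

Lemma kill_gnumer k q a b :
  kill_x1 (gnumer k q a b) = gnumer k (fun i => kill_x1 (q i)) a b.
Proof.
rewrite rmorph_prod; apply: eq_bigr => i /kill_x1X kill_Xi.
by rewrite rmorphM !rmorphXn /= kill_Xi.
Qed.

Local Notation term := (R * ('I_n -> nat) * ('I_n -> nat))%type.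

Definition gcomb q (s : seq term) : K := \sum_(t <- s) cst n t.1.1 * gmon q t.1.2 t.2.

Definition xbounded k (t : term) := [forall i, t.2 i <= k]%N.

Definition xdeg (s : seq term) := (\sum_(t <- s) \sum_(i < n) t.2 i)%N.

Lemma all_xbounded s : all (xbounded (xdeg s)) s.
Proof.
elim: s => //= t s IH; rewrite /xdeg big_cons; apply/andP; split.
  by apply/forallP => i; rewrite (bigD1 i) //= -addnA leq_addr.
apply: sub_all IH => t' /forallP le_t'; apply/forallP => i.
by rewrite (leq_trans (le_t' i)) // leq_addl.
Qed.

Lemma gcomb_frac k q s : all (xbounded k) s ->
  gcomb q s = tofr (\sum_(t <- s) t.1.1%:MP * gnumer k q t.1.2 t.2) / tofr (D ^+ k).
Proof.
move=> bounded_s; rewrite rmorph_sum mulr_suml.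
apply: (eq_big_all bounded_s) => t /forallP le_tk.
by rewrite (gmon_numer q t.1.2 le_tk) rmorphM mulrA.
Qed.

Lemma phi_gcomb q s : phi (gcomb q s) = gcomb (fun i => kill_x1 (q i)) s.
Proof.
rewrite (gcomb_frac q (all_xbounded s)).
rewrite (gcomb_frac (fun i => kill_x1 (q i)) (all_xbounded s)).
rewrite phi_frac; congr (tofr _ / _); rewrite rmorph_sum.
by apply: eq_bigr => t _; rewrite rmorphM /= kill_x1C kill_gnumer.
Qed.

Lemma phi0 : phi (0 : K) = 0.
Proof. by have := phi_gcomb (fun _ => 0) [::]; rewrite /gcomb !big_nil. Qed.

Lemma gcomb_cat q s1 s2 : gcomb q (s1 ++ s2) = gcomb q s1 + gcomb q s2.
Proof. exact: big_cat. Qed.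

Definition scale_term c (t : term) : term := (c * t.1.1, t.1.2, t.2).

Lemma gcomb_scale q c s : gcomb q (map (scale_term c) s) = cst n c * gcomb q s.
Proof.
by rewrite /gcomb big_map mulr_sumr; apply: eq_bigr => t _; rewrite rmorphM mulrA.
Qed.

Definition standardb (t : term) :=
  [forall i : 'I_n, ((i : nat) != 0%N) ==> (t.1.2 i == 0%N) || (t.2 i == 0%N)].

Lemma standardP t : reflect (is_standard t.1.2 t.2) (standardb t).
Proof.
apply: (iffP forallP) => [std i i_neq0 | std i].
  by have := std i; rewrite i_neq0 => /orP[] /eqP; [left | right].
by apply/implyP => /std [] ->; rewrite eqxx ?orbT.
Qed.

Lemma inRstP q f : inRst q f <-> exists2 s, all standardb s & f = gcomb q s.
Proof.
split=> [[s [std_s ->]]|[s std_s ->]]; exists s => //; last split=> // t.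
  elim: s std_s => //= t s IH std_ts; apply/andP; split.
    by apply/standardP/std_ts; left.
  by apply: IH => t' t'_in; apply: std_ts; right.
elim: s std_s => //= t' s IH /andP[std_t' std_s] [<-|]; [exact/standardP | exact: IH].
Qed.

Lemma inRst0 q : inRst q 0.
Proof. by apply/inRstP; exists [::]; rewrite // /gcomb big_nil. Qed.

Lemma inRstD q f g : inRst q f -> inRst q g -> inRst q (f + g).
Proof.
move=> /inRstP[s1 std1 ->] /inRstP[s2 std2 ->]; apply/inRstP.
by exists (s1 ++ s2); rewrite ?all_cat ?std1 ?gcomb_cat.
Qed.

Lemma inRstZ q c f : inRst q f -> inRst q (cst n c * f).
Proof.
move=> /inRstP[s std ->]; apply/inRstP.
by exists (map (scale_term c) s); rewrite ?all_map ?gcomb_scale.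
Qed.

Lemma inRst_sum q (I : Type) (r : seq I) (P : pred I) (f : I -> K) :
  (forall i, P i -> inRst q (f i)) -> inRst q (\sum_(i <- r | P i) f i).
Proof.
move=> inRst_f; elim: r => [|i r IH].
  by rewrite big_nil; apply: inRst0.
by rewrite big_cons; case: ifP => // Pi; apply: inRstD; [apply: inRst_f|].
Qed.

Definition decr_at (i0 : 'I_n) (a : 'I_n -> nat) i := if i == i0 then (a i).-1 else a i.

Lemma sum_decr_at (i0 : 'I_n) b : (0 < b i0)%N ->
  (\sum_i decr_at i0 b i).+1 = \sum_i b i.
Proof.
move=> b_pos; rewrite (bigD1 i0) // [RHS](bigD1 i0) //= /decr_at eqxx -addSn prednK //.
by congr (_ + _)%N; apply: eq_bigr => i /negbTE ->.
Qed.

Lemma gmon_pair q a b (i0 : 'I_n) : (i0 : nat) != 0%N -> (0 < a i0)%N -> (0 < b i0)%N ->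
  gmon q a b = gmon q (decr_at i0 a) (decr_at i0 b) * tofr (q i0).
Proof.
move=> i0_neq0 a_pos b_pos.
rewrite /gmon (bigD1 i0 i0_neq0) [in RHS](bigD1 i0 i0_neq0) /=.
rewrite /decr_at !eqxx [RHS]mulrAC; congr (_ * _); last first.
  by apply: eq_bigr => i /andP[_ /negbTE ->].
rewrite -{1}(prednK a_pos) -{1}(prednK b_pos) !exprS mulrACA /xpv.
by rewrite [_ * (_ / _)]mulrC divfK ?xv_neq0 // mulrC.
Qed.

Section FirstVariable.
Variable x1 : 'I_n.
Hypothesis x1_eq0 : x1 = 0%N :> nat.

Lemma kill_x1_mpolyX m :
  kill_x1 ('X_[m] : {mpoly R[n]}) = if m x1 == 0%N then 'X_[m] else 0.
Proof.
rewrite /kill_x1 comp_mpolyX (bigD1 x1) //= tnth_mktuple x1_eq0 /=.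
have [m_x1|m_x1] := eqVneq (m x1) 0%N; last by rewrite expr0n (negbTE m_x1) mul0r.
rewrite m_x1 expr0 mul1r mpolyXE_id [RHS](bigD1 x1) //= m_x1 expr0 mul1r.
apply: eq_bigr => i neq_i; rewrite tnth_mktuple ifN //.
by apply: contra neq_i => /eqP i_eq0; apply/eqP/val_inj; rewrite /= i_eq0 x1_eq0.
Qed.

Lemma mcoeff_kill_x1 p m : (kill_x1 p)@_m = if m x1 == 0%N then p@_m else 0.
Proof.
rewrite [in LHS](mpolyE p) rmorph_sum raddf_sum /=.
under eq_bigr => u _ do rewrite -mul_mpolyC rmorphM /= kill_x1C kill_x1_mpolyX.
have [m_x1|m_x1] := eqVneq (m x1) 0%N.
  rewrite [in RHS](mpolyE p) raddf_sum /=; apply: eq_bigr => u _.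
  case: eqP => u_x1; first by rewrite mul_mpolyC.
  rewrite mulr0 mcoeff0 mcoeffZ mcoeffX; case: eqP => [umE|]; last by rewrite mulr0.
  by rewrite umE m_x1 in u_x1.
apply: big1 => u _; case: eqP => u_x1; last by rewrite mulr0 mcoeff0.
rewrite mcoeffCM mcoeffX; case: eqP => [umE|]; last by rewrite mulr0.
by rewrite -umE u_x1 eqxx in m_x1.
Qed.

Lemma msupp_kill_x1 p m : m \in msupp (kill_x1 p) -> m x1 = 0%N /\ m \in msupp p.
Proof.
by rewrite !mcoeff_msupp mcoeff_kill_x1; case: (m x1 =P 0%N) => // _; rewrite eqxx.
Qed.

Lemma lexmonic_kill_x1 p m : m x1 = 0%N -> lexmonic p m -> lexmonic (kill_x1 p) m.
Proof.
move=> m_x1 [pm1 first_m]; split; first by rewrite mcoeff_kill_x1 m_x1 eqxx.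
by move=> u /msupp_kill_x1[_ /first_m].
Qed.

Lemma gmon_mulX q a b m : m x1 = 0%N ->
  gmon q a b * tofr 'X_[m] = gmon q (fun i => a i + m i)%N b.
Proof.
move=> m_x1; rewrite mpolyXE_id rmorph_prod (bigD1 x1) //= m_x1 expr0 rmorph1 mul1r.
rewrite (eq_bigl (fun i : 'I_n => (i : nat) != 0%N)); last first.
  by move=> i /=; rewrite -val_eqE /= x1_eq0.
rewrite /gmon -big_split /=; apply: eq_bigr => i _.
by rewrite rmorphXn mulrAC -exprD.
Qed.

(* Rewriting with x_i x'_i = q_i lowers the total x'-degree. *)
Lemma inRst_gmon q a b :
  (forall (i : 'I_n) m, (i : nat) != 0%N -> m \in msupp (q i) -> m x1 = 0%N) ->
  inRst q (gmon q a b).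
Proof.
move=> q_x1free; suff: forall N a b, (\sum_i b i < N)%N -> inRst q (gmon q a b).
  by apply; apply: ltnSn.
elim=> // N IHN {}a {}b lt_bN.
have [std|/forallPn[i0]] := boolP (standardb (1, a, b)).
  apply/inRstP; exists [:: (1, a, b)]; rewrite /= ?std //.
  by rewrite /gcomb big_seq1 rmorph1 mul1r.
rewrite negb_imply negb_or => /and3P[i0_neq0]; rewrite -!lt0n /= => a_pos b_pos.
rewrite (gmon_pair q i0_neq0 a_pos b_pos) [q i0]mpolyE rmorph_sum mulr_sumr big_seq.
apply: inRst_sum => u /(q_x1free _ _ i0_neq0) u_x1.
rewrite -mul_mpolyC rmorphM mulrCA gmon_mulX //; apply: inRstZ; apply: IHN.
by rewrite -ltnS sum_decr_at.
Qed.

Lemma inA_decomposition q f :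
  inA q f <-> exists k g, [/\ inA q k, phi k = 0, inRst q g & f = k + g].
Proof.
split=> [[s ->]|[k [g [[s1 ->] _ [s2 [_ ->]] ->]]]]; last first.
  by exists (s1 ++ s2); rewrite big_cat.
have /inRstP[S stdS eqS] :
    inRst (fun i => kill_x1 (q i)) (gcomb (fun i => kill_x1 (q i)) s).
  apply: inRst_sum => t _; apply: inRstZ; apply: inRst_gmon => i m _.
  by case/msupp_kill_x1.
exists (gcomb q (s ++ map (scale_term (-1)) S)), (gcomb q S); split.
- by exists (s ++ map (scale_term (-1)) S).
- by rewrite phi_gcomb gcomb_cat gcomb_scale -eqS rmorphN1 mulN1r subrr.
- by apply/inRstP; exists S.
- by rewrite gcomb_cat gcomb_scale rmorphN1 mulN1r subrK.
Qed.

End FirstVariable.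

End Ambient.

Arguments standardb {n R} t.

Section LeadingMonomials.
Variables (n : nat) (R : idomainType).
Variables (F : 'I_n -> {mpoly R[n]}) (M : 'I_n -> 'X_{1..n}).
Variable x1 : 'I_n.
Hypothesis x1_eq0 : x1 = 0%N :> nat.
Hypothesis lexmonic_F : forall i, lexmonic (F i) (M i).
Hypothesis M_upper : forall i j : 'I_n, (j <= i)%N -> M i j = 0%N.
Local Notation term := (R * ('I_n -> nat) * ('I_n -> nat))%type.
Local Notation G := (fun i => kill_x1 (F i)).
Implicit Types (a b : 'I_n -> nat) (s : seq term).

Lemma lexmonic_G i : lexmonic (G i) (M i).
Proof.
by apply: (lexmonic_kill_x1 x1_eq0) (lexmonic_F i); apply: M_upper; rewrite x1_eq0.
Qed.

Definition gnumer_lead k a b : 'X_{1..n} :=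
  (\sum_(i < n | (i : nat) != 0%N) (U_(i) *+ (a i + (k - b i)) + M i *+ b i))%MM.

Lemma lexmonic_gnumer k a b : lexmonic (gnumer k G a b) (gnumer_lead k a b).
Proof.
apply: lexmonic_prod => i _; apply: lexmonicM; last exact/lexmonicXn/lexmonic_G.
by rewrite mpolyXn; apply: lexmonicX.
Qed.

Lemma gnumer_lead_coord k a b (j : 'I_n) : (j : nat) != 0%N ->
  gnumer_lead k a b j =
    (a j + (k - b j) + \sum_(i < n | (i : nat) != 0%N) M i j * b i)%N.
Proof.
move=> j_neq0; rewrite /gnumer_lead mnm_sumE.
under eq_bigr do rewrite mnmDE !mulmnE mnm1E.
rewrite big_split /= (bigD1 j j_neq0) /= eqxx mul1n big1 ?addn0 //.
by move=> i /andP[_ /negbTE ->].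
Qed.

(* Since M i only involves the x_j with j > i, the leading monomial is
   triangular in the exponents; for standard bounded [a, b] it determines them. *)
Lemma gnumer_lead_inj k (t t' : term) : standardb t -> standardb t' ->
  xbounded k t -> xbounded k t' ->
  gnumer_lead k t.1.2 t.2 = gnumer_lead k t'.1.2 t'.2 ->
  forall i : 'I_n, (i : nat) != 0%N -> t.1.2 i = t'.1.2 i /\ t.2 i = t'.2 i.
Proof.
move=> /standardP std /standardP std' /forallP bnd /forallP bnd' eq_lead.
suff: forall N (i : 'I_n), (i < N)%N -> (i : nat) != 0%N ->
    t.1.2 i = t'.1.2 i /\ t.2 i = t'.2 i.
  by move=> coord i; apply: coord (ltnSn i).
elim=> // N IHN i; rewrite ltnS leq_eqVlt => /predU1P[iN|/IHN//] i_neq0.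
have := congr1 (fun m : 'X_{1..n} => m i) eq_lead; rewrite /= !gnumer_lead_coord //.
have -> : (\sum_(j < n | (j : nat) != 0%N) M j i * t.2 j =
           \sum_(j < n | (j : nat) != 0%N) M j i * t'.2 j)%N.
  apply: eq_bigr => j j_neq0; have [lt_ji|le_ij] := ltnP j i.
    by rewrite (IHN j _ j_neq0).2 // -iN.
  by rewrite M_upper.
move/eqP; rewrite eqn_add2r => /eqP.
have := std i i_neq0; have := std' i i_neq0; have := bnd i; have := bnd' i; lia.
Qed.

Lemma gcomb_kill_eq0 s : all standardb s -> gcomb G s = 0 -> gcomb F s = 0.
Proof.
move=> std_s; set k := xdeg s; have bnd_s := all_xbounded s.
rewrite (gcomb_frac G bnd_s) => /eqP.
rewrite mulf_eq0 invr_eq0 (negbTE (Dprod_neq0 _ _ k)) orbF tofrac_eq0 => /eqP rel.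
apply: (lexmonic_relation (P := fun t => standardb t && xbounded k t)
  (m := fun t => gnumer_lead k t.1.2 t.2) (p := fun t => gnumer k G t.1.2 t.2)) rel.
- by move=> t _; apply: lexmonic_gnumer.
- move=> t t' /andP[std bnd] /andP[std' bnd'].
  move=> /(gnumer_lead_inj std std' bnd bnd') eq_key.
  by split; apply: eq_bigr => i /eq_key[-> ->].
- by rewrite all_predI std_s.
Qed.

Lemma phi_inj_std f g : inRst F f -> inRst F g -> phi f = phi g -> f = g.
Proof.
move=> /inRstP[s1 std1 ->] /inRstP[s2 std2 ->]; rewrite !phi_gcomb => eq_phi.
have diffE q : gcomb q s1 - gcomb q s2 = gcomb q (s1 ++ map (scale_term (-1)) s2).
  by rewrite gcomb_cat gcomb_scale rmorphN1 mulN1r.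
apply/eqP; rewrite -subr_eq0 diffE; apply/eqP/gcomb_kill_eq0.
  by rewrite all_cat std1 all_map.
by rewrite -diffE eq_phi subrr.
Qed.

End LeadingMonomials.

Theorem lemma4p17 (R : idomainType) (hUFD : is_UFD R) (hZ : contains_Z R)
  (n : nat) (hn : (2 <= n)%N) (F : 'I_n -> {mpoly R[n]})
  (hseed : LP_seed F) (hcond : condition_1_2 F) :
  (forall f : ambient n R,
     inA F f <->
     exists k s : ambient n R, [/\ inA F k, phi k = 0, inRst F s & f = k + s])
  /\ (forall f : ambient n R, inA F f -> phi f = 0 -> inRst F f -> f = 0)
  /\ (forall f g : ambient n R, inRst F f -> inRst F g -> phi f = phi g -> f = g).
Proof.
have [_ [M condM]] := hcond.
have lexmonic_F i : lexmonic (F i) (M i).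
  by have [[first_M [FM1 _]] _ _] := condM i; apply: lexfirst_lexmonic.
have M_upper (i j : 'I_n) : (j <= i)%N -> M i j = 0%N.
  by have [[_ [_ M_upper_i]] _ _] := condM i; apply: M_upper_i.
pose x1 : 'I_n := Ordinal (ltnW hn).
split; first exact: (inA_decomposition (x1 := x1) erefl).
have inj := phi_inj_std (x1 := x1) erefl lexmonic_F M_upper.
split; last exact: inj.
by move=> f _ phi_f std_f; apply: inj std_f (inRst0 _) _; rewrite phi_f phi0.
Qed.
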